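(* Let $n\ge 3$ and let $\zeta':\mathrm{TVB}_n\to\mathrm{GL}_{n+1}(\mathbb{C})$ be a complex homogeneous local representation of $\mathrm{TVB}_n$. Then $\zeta'$ is equivalent to one of the following seven representations, described by giving $2\times 2$ matrices $S,R,G$ such that $\zeta'(\sigma_i)=L_i(S)$, $\zeta'(\rho_i)=L_i(R)$ for $1\le i\le n-1$ and $\zeta'(\gamma_j)=L_j(G)$ for $1\le j\le n$: \begin{itemize} \item[(1)] $\zeta'_1$: $S=\begin{pmatrix}0&b\\ c&0\end{pmatrix}$, $R=\begin{pmatrix}0&-\frac{\sqrt b}{\sqrt c}\\ -\frac{\sqrt c}{\sqrt b}&0\end{pmatrix}$, $G=\begin{pmatrix}-1&0\\0&1\end{pmatrix}$, where $b,c\in\mathbb{C}^*$. \item[(2)] $\zeta'_2$: $S=\begin{pmatrix}0&b\\ c&0\end{pmatrix}$, $R=\begin{pmatrix}0&\frac{\sqrt b}{\sqrt c}\\ \frac{\sqrt c}{\sqrt b}&0\end{pmatrix}$, $G=\begin{pmatrix}-1&0\\0&1\end{pmatrix}$, where $b,c\in\mathbb{C}^*$. \item[(3)] $\zeta'_3$: $S=\begin{pmatrix}0&b\\ c&0\end{pmatrix}$, $R=\begin{pmatrix}0&-\frac{\sqrt b}{\sqrt c}\\ -\frac{\sqrt c}{\sqrt b}&0\end{pmatrix}$, $G=I_2$ (so $\zeta'_3(\gamma_j)=I_{n+1}$), where $b,c\in\mathbb{C}^*$. \item[(4)] $\zeta'_4$: $S=\begin{pmatrix}0&b\\ c&0\end{pmatrix}$,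 $R=\begin{pmatrix}0&\frac{\sqrt b}{\sqrt c}\\ \frac{\sqrt c}{\sqrt b}&0\end{pmatrix}$, $G=I_2$, where $b,c\in\mathbb{C}^*$. \item[(5)] $\zeta'_5$: $S=I_2$ (so $\zeta'_5(\sigma_i)=I_{n+1}$), $R=\begin{pmatrix}0&x\\ \frac1x&0\end{pmatrix}$, $G=\begin{pmatrix}-1&0\\0&1\end{pmatrix}$, where $x\in\mathbb{C}^*$. \item[(6)] $\zeta'_6$: $S=I_2$, $R=\begin{pmatrix}0&x\\ \frac1x&0\end{pmatrix}$, $G=I_2$, where $x\in\mathbb{C}^*$. \item[(7)] $\zeta'_7$: $S=R=G=I_2$, i.e. $\zeta'_7(\sigma_i)=\zeta'_7(\rho_i)=\zeta'_7(\gamma_j)=I_{n+1}$. \end{itemize} Here $\mathbb{C}^*=\mathbb{C}\setminus\{0\}$ and $\sqrt b,\sqrt c$ denote square roots of $b,c$.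
   Context: For $n\ge 2$, the twisted virtual braid group $\mathrm{TVB}_n$ is the group with generators $\sigma_1,\dots,\sigma_{n-1}$, $\rho_1,\dots,\rho_{n-1}$, $\gamma_1,\dots,\gamma_n$ and defining relations: $\sigma_i\sigma_{i+1}\sigma_i=\sigma_{i+1}\sigma_i\sigma_{i+1}$ ($1\le i\le n-2$); $\sigma_i\sigma_j=\sigma_j\sigma_i$ ($|i-j|\ge2$); $\rho_i^2=1$; $\rho_i\rho_j=\rho_j\rho_i$ ($|i-j|\ge 2$); $\rho_i\rho_{i+1}\rho_i=\rho_{i+1}\rho_i\rho_{i+1}$ ($1\le i\le n-2$); $\sigma_i\rho_j=\rho_j\sigma_i$ ($|i-j|\ge 2$); $\rho_i\rho_{i+1}\sigma_i=\sigma_{i+1}\rho_i\rho_{i+1}$ ($1\le i\le n-2$); $\gamma_i^2=1$ ($1\le i\le n$); $\gamma_i\gamma_j=\gamma_j\gamma_i$ (all $i,j$); $\gamma_j\rho_i=\rho_i\gamma_j$ and $\gamma_j\sigma_i=\sigma_i\gamma_j$ ($|i-j|\ge 2$); $\rho_i\gamma_i=\gamma_{i+1}\rho_i$ ($1\le i\le n-1$); $\rho_i\sigma_i\rho_i=\gamma_{i+1}\gamma_i\sigma_i\gamma_i\gamma_{i+1}$ ($1\le i\le n-1$). For a $2\times2$ matrix $M$ and $1\le i\le n$, let $L_i(M)$ be the $(n+1)\times(n+1)$ block-diagonal matrix $\mathrm{diag}(I_{i-1},M,I_{n-i})$. A complex homogeneous local representation $\zeta':\mathrm{TVB}_n\to\mathrm{GL}_{n+1}(\mathbb{C})$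 is a group homomorphism such that there exist $S,R,G\in\mathrm{GL}_2(\mathbb{C})$ with $\zeta'(\sigma_i)=L_i(S)$, $\zeta'(\rho_i)=L_i(R)$ for all $1\le i\le n-1$, and $\zeta'(\gamma_j)=L_j(G)$ for all $1\le j\le n$. Two representations are equivalent if they are conjugate by a fixed invertible matrix. *)

From HB Require Import structures.
From mathcomp Require Import all_boot all_order all_algebra.
From mathcomp Require Import reals complex.
Set Implicit Arguments. Unset Strict Implicit. Unset Printing Implicit Defensive.
Import Order.TTheory GRing.Theory Num.Theory.
Local Open Scope ring_scope.

Section TVB.
Variable F : fieldType.

Definition mx2 (a b c d : F) : 'M[F]_2 :=
  \matrix_(k < 2, l < 2)
    if val k == 0%N then (if val l == 0%N then a else b)
    else (if val l == 0%N then c else d).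

(* L_i(M) = diag(I_{i-1}, M, I_{n-i}) in 'M_(n+1), with i 1-based (1 <= i <= n);
   rows/columns are 0-based, so M occupies rows/columns i-1 and i. *)
Definition Lmat (n i : nat) (M : 'M[F]_2) : 'M[F]_(n.+1) :=
  \matrix_(j < n.+1, k < n.+1)
    if (i.-1 <= j <= i)%N && (i.-1 <= k <= i)%N
    then M (inord (j - i.-1)) (inord (k - i.-1))
    else (j == k)%:R.

Definition far (i j : nat) : bool := (i + 2 <= j)%N || (j + 2 <= i)%N.

(* The assignment sigma_i |-> L_i(S), rho_i |-> L_i(R), gamma_j |-> L_j(G)
   extends to a group homomorphism TVB_n -> GL_{n+1}(F) iff S, R, G are
   invertible and the images satisfy all defining relations of TVB_n. *)
Definition is_hom_local_rep (n : nat) (S R G : 'M[F]_2) : Prop :=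
  let s i := Lmat n i S in
  let r i := Lmat n i R in
  let g j := Lmat n j G in
  (S \in unitmx /\ R \in unitmx /\ G \in unitmx) /\
   (forall i, (1 <= i <= n - 2)%N -> s i *m s i.+1 *m s i = s i.+1 *m s i *m s i.+1) /\
   (forall i j, (1 <= i <= n - 1)%N -> (1 <= j <= n - 1)%N -> far i j ->
        s i *m s j = s j *m s i) /\
   (forall i, (1 <= i <= n - 1)%N -> r i *m r i = 1%:M) /\
   (forall i j, (1 <= i <= n - 1)%N -> (1 <= j <= n - 1)%N -> far i j ->
        r i *m r j = r j *m r i) /\
   (forall i, (1 <= i <= n - 2)%N -> r i *m r i.+1 *m r i = r i.+1 *m r i *m r i.+1) /\
   (forall i j, (1 <= i <= n - 1)%N -> (1 <= j <= n - 1)%N -> far i j ->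
        s i *m r j = r j *m s i) /\
   (forall i, (1 <= i <= n - 2)%N -> r i *m r i.+1 *m s i = s i.+1 *m r i *m r i.+1) /\
   (forall j, (1 <= j <= n)%N -> g j *m g j = 1%:M) /\
   (forall i j, (1 <= i <= n)%N -> (1 <= j <= n)%N -> g i *m g j = g j *m g i) /\
   (forall i j, (1 <= i <= n - 1)%N -> (1 <= j <= n)%N -> far i j ->
        g j *m r i = r i *m g j /\ g j *m s i = s i *m g j) /\
   (forall i, (1 <= i <= n - 1)%N -> r i *m g i = g i.+1 *m r i) /\
   (forall i, (1 <= i <= n - 1)%N ->
        r i *m s i *m r i = g i.+1 *m g i *m s i *m g i *m g i.+1).

Definition hlr_equiv (n : nat) (S R G S' R' G' : 'M[F]_2) : Prop :=
  exists P : 'M[F]_(n.+1), P \in unitmx /\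
   (forall i, (1 <= i <= n - 1)%N ->
      P *m Lmat n i S *m invmx P = Lmat n i S' /\
      P *m Lmat n i R *m invmx P = Lmat n i R') /\
   (forall j, (1 <= j <= n)%N -> P *m Lmat n j G *m invmx P = Lmat n j G').

Definition Gm : 'M[F]_2 := mx2 (-1) 0 0 1.

Definition zeta1 (S R G : 'M[F]_2) : Prop :=
  exists b c sb sc : F, [/\ b != 0, c != 0, sb ^+ 2 = b & sc ^+ 2 = c] /\ [/\
    S = mx2 0 b c 0, R = mx2 0 (- (sb / sc)) (- (sc / sb)) 0 & G = Gm].
Definition zeta2 (S R G : 'M[F]_2) : Prop :=
  exists b c sb sc : F, [/\ b != 0, c != 0, sb ^+ 2 = b & sc ^+ 2 = c] /\ [/\
    S = mx2 0 b c 0, R = mx2 0 (sb / sc) (sc / sb) 0 & G = Gm].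
Definition zeta3 (S R G : 'M[F]_2) : Prop :=
  exists b c sb sc : F, [/\ b != 0, c != 0, sb ^+ 2 = b & sc ^+ 2 = c] /\ [/\
    S = mx2 0 b c 0, R = mx2 0 (- (sb / sc)) (- (sc / sb)) 0 & G = 1%:M].
Definition zeta4 (S R G : 'M[F]_2) : Prop :=
  exists b c sb sc : F, [/\ b != 0, c != 0, sb ^+ 2 = b & sc ^+ 2 = c] /\ [/\
    S = mx2 0 b c 0, R = mx2 0 (sb / sc) (sc / sb) 0 & G = 1%:M].
Definition zeta5 (S R G : 'M[F]_2) : Prop :=
  exists x : F, [/\ x != 0, S = 1%:M, R = mx2 0 x x^-1 0 & G = Gm].
Definition zeta6 (S R G : 'M[F]_2) : Prop :=
  exists x : F, [/\ x != 0, S = 1%:M, R = mx2 0 x x^-1 0 & G = 1%:M].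
Definition zeta7 (S R G : 'M[F]_2) : Prop :=
  [/\ S = 1%:M, R = 1%:M & G = 1%:M].

End TVB.

(** For n >= 3 every relation of TVB_n at index i = 1 involves only L_1 and L_2,
    which act on the first three coordinates, so it becomes an identity between
    3x3 matrices.  The gamma relations and rho_1 gamma_1 = gamma_2 rho_1 force
    G = diag(+-1, 1); rho^2 = 1 and the braid relation for rho force T = 1 or
    T = [[0, x], [1/x, 0]].  If T = 1, the mixed relation and rho_1 gamma_1 =
    gamma_2 rho_1 give S = G = 1.  Otherwise gamma_2 gamma_1 acts as the scalar
    +-1 on the block of sigma_1, so rho sigma rho = gamma gamma sigma gamma gamma
    says T S T = S, i.e. S = [[a, x^2 c], [c, a]], and the braid relation for
    sigma leaves S = 1 or a = 0.  Hence (S, T, G) itself belongs to one of the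
    seven families, and the conjugating matrix can be taken to be 1. *)
From HB Require Import structures.
From mathcomp Require Import all_boot all_order all_algebra.
From mathcomp Require Import reals complex.
From mathcomp Require Import ring.
Set Implicit Arguments. Unset Strict Implicit. Unset Printing Implicit Defensive.
Import Order.TTheory GRing.Theory Num.Theory.
Local Open Scope ring_scope.

Local Notation L1 := (Lmat 2 1).
Local Notation L2 := (Lmat 2 2).

Section LocalMatrices.
Variable F : fieldType.

Definition padmx p q (A : 'M[F]_p) : 'M[F]_(p + q) := block_mx A 0 0 1%:M.

Lemma padmxM p q (A B : 'M[F]_p) : padmx q A *m padmx q B = padmx q (A *m B).
Proof. by rewrite /padmx mulmx_block !mulmx0 !mul0mx !mulmx1 !addr0 add0r. Qed.

Lemma padmx1 p q : padmx q (1%:M : 'M[F]_p) = 1%:M.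
Proof. by rewrite /padmx -scalar_mx_block. Qed.

Lemma padmx_inj p q : injective (@padmx p q).
Proof. by move=> A B /eq_block_mx[]. Qed.

Lemma Lmat_padmx p q i (M : 'M[F]_2) : (i <= p)%N ->
  Lmat (p + q) i M = padmx q (Lmat p i M) :> 'M_(p.+1 + q).
Proof.
move=> le_ip; apply/matrixP => j k; rewrite /padmx.
have out_i l : (p.+1 + l <= i)%N = false by rewrite leqNgt ltn_addr.
case: (split_ordP j) => j' ->; case: (split_ordP k) => k' ->.
- by rewrite [RHS]block_mxEul !mxE.
- by rewrite [RHS]block_mxEur !mxE /= out_i !andbF -val_eqE /= ltn_eqF // ltn_addr.
- by rewrite [RHS]block_mxEdl !mxE /= out_i andbF -val_eqE /= gtn_eqF ?ltn_addr.
- by rewrite [RHS]block_mxEdr !mxE /= out_i !andbF -val_eqE /= eqn_add2l.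
Qed.

Lemma mx2_ex (M : 'M[F]_2) : exists a b c d, M = mx2 a b c d.
Proof.
exists (M 0 0), (M 0 1), (M 1 0), (M 1 1); apply/matrixP => k l; rewrite !mxE.
by case: k => [[|[|//]] ?]; case: l => [[|[|//]] ?]; congr (M _ _); apply: val_inj.
Qed.

Lemma mx2_1 : mx2 (1 : F) 0 0 1 = 1%:M.
Proof.
by apply/matrixP => k l; rewrite !mxE; case: k => [[|[|//]] ?]; case: l => [[|[|//]] ?].
Qed.

Definition mx3 (x00 x01 x02 x10 x11 x12 x20 x21 x22 : F) : 'M[F]_3 :=
  \matrix_(k < 3, l < 3)
    let row y0 y1 y2 := if val l == 0%N then y0 else if val l == 1%N then y1 else y2 in
    if val k == 0%N then row x00 x01 x02
    else if val k == 1%N then row x10 x11 x12 else row x20 x21 x22.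

Lemma mx3_inj x00 x01 x02 x10 x11 x12 x20 x21 x22 y00 y01 y02 y10 y11 y12 y20 y21 y22 :
  mx3 x00 x01 x02 x10 x11 x12 x20 x21 x22 = mx3 y00 y01 y02 y10 y11 y12 y20 y21 y22 ->
  [/\ [/\ x00 = y00, x01 = y01 & x02 = y02], [/\ x10 = y10, x11 = y11 & x12 = y12]
    & [/\ x20 = y20, x21 = y21 & x22 = y22]].
Proof.
move=> E; have entry k l : (k < 3)%N -> (l < 3)%N ->
    mx3 x00 x01 x02 x10 x11 x12 x20 x21 x22 (inord k) (inord l) =
    mx3 y00 y01 y02 y10 y11 y12 y20 y21 y22 (inord k) (inord l) by rewrite E.
by split; split;
  [move: (entry 0%N 0%N) | move: (entry 0%N 1%N) | move: (entry 0%N 2%N)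
  | move: (entry 1%N 0%N) | move: (entry 1%N 1%N) | move: (entry 1%N 2%N)
  | move: (entry 2%N 0%N) | move: (entry 2%N 1%N) | move: (entry 2%N 2%N)];
  rewrite !mxE /= !inordK //; apply.
Qed.

Lemma mul_mx3 x00 x01 x02 x10 x11 x12 x20 x21 x22 y00 y01 y02 y10 y11 y12 y20 y21 y22 :
  mx3 x00 x01 x02 x10 x11 x12 x20 x21 x22 *m mx3 y00 y01 y02 y10 y11 y12 y20 y21 y22 =
  mx3 (x00 * y00 + x01 * y10 + x02 * y20) (x00 * y01 + x01 * y11 + x02 * y21)
      (x00 * y02 + x01 * y12 + x02 * y22)
      (x10 * y00 + x11 * y10 + x12 * y20) (x10 * y01 + x11 * y11 + x12 * y21)
      (x10 * y02 + x11 * y12 + x12 * y22)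
      (x20 * y00 + x21 * y10 + x22 * y20) (x20 * y01 + x21 * y11 + x22 * y21)
      (x20 * y02 + x21 * y12 + x22 * y22).
Proof.
apply/matrixP => k l; rewrite !mxE !big_ord_recl big_ord0 addr0 addrA !mxE /=.
by case: k => [[|[|[|//]]] ?]; case: l => [[|[|[|//]]] ?].
Qed.

Lemma mx3_1 : mx3 1 0 0 0 1 0 0 0 1 = 1%:M.
Proof.
apply/matrixP => k l; rewrite !mxE.
by case: k => [[|[|[|//]]] ?]; case: l => [[|[|[|//]]] ?].
Qed.

Lemma Lmat21_mx2 a b c d : L1 (mx2 a b c d) = mx3 a b 0 c d 0 0 0 1.
Proof.
apply/matrixP => k l; rewrite !mxE.
by case: k => [[|[|[|//]]] ?]; case: l => [[|[|[|//]]] ?]; rewrite /= ?mxE /= ?inordK.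
Qed.

Lemma Lmat22_mx2 a b c d : L2 (mx2 a b c d) = mx3 1 0 0 0 a b 0 c d.
Proof.
apply/matrixP => k l; rewrite !mxE.
by case: k => [[|[|[|//]]] ?]; case: l => [[|[|[|//]]] ?]; rewrite /= ?mxE /= ?inordK.
Qed.

Let mx3_simpl := (mul0r, mulr0, add0r, addr0, mul1r, mulr1).

Lemma Lmat21_eq22 (M : 'M[F]_2) : L1 M = L2 M -> M = 1%:M.
Proof.
case: (mx2_ex M) => [a [b [c [d ->]]]].
by rewrite Lmat21_mx2 Lmat22_mx2 => /mx3_inj[[-> -> _] [-> _ _] [_ _ <-]]; rewrite mx2_1.
Qed.

Lemma gamma_cases (T G : 'M[F]_2) :
  L1 G *m L1 G = 1%:M -> L1 G *m L2 G = L2 G *m L1 G -> L1 T *m L1 G = L2 G *m L1 T ->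
  G = 1%:M \/ G = Gm F.
Proof.
case: (mx2_ex T) (mx2_ex G) => [e [f [g [h ->]]]] [p [q [r [s ->]]]].
rewrite !Lmat21_mx2 !Lmat22_mx2 -mx3_1 !mul_mx3 !mx3_simpl.
move=> /mx3_inj[[p2 _ _] _ _] /mx3_inj[[_ _ q2] _ [r2 _ _]] /mx3_inj[_ _ [_ _ <-]].
have q0 : q = 0 by apply/eqP; rewrite -sqrf_eq0 expr2 q2.
have r0 : r = 0 by apply/eqP; rewrite -sqrf_eq0 expr2 -r2.
move: p2; rewrite q0 r0 mulr0 addr0 => p2.
have /orP[/eqP-> | /eqP->] : (p == 1) || (p == -1) by rewrite -sqrf_eq1 expr2 p2.
- by left; rewrite mx2_1.
- by right.
Qed.

Lemma rho_cases (T : 'M[F]_2) :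
  L1 T *m L1 T = 1%:M -> L1 T *m L2 T *m L1 T = L2 T *m L1 T *m L2 T ->
  T = 1%:M \/ exists2 x, x != 0 & T = mx2 0 x x^-1 0.
Proof.
case: (mx2_ex T) => [e [f [g [h ->]]]].
rewrite !Lmat21_mx2 !Lmat22_mx2 -mx3_1 !mul_mx3 !mx3_simpl.
move=> /mx3_inj[[e2 ef _] [ge h2 _] _] /mx3_inj[[e1 f1 _] [g1 _ _] [_ _ h1]].
have [e0 | e_neq0] := eqVneq e 0.
  move: e2 h2; rewrite e0 !mul0r add0r => fg1 h2.
  have f_neq0 : f != 0 by apply: contra_eq_neq fg1 => ->; rewrite mul0r eq_sym oner_neq0.
  have hh : h * h = 0 by apply: (addrI (g * f)); rewrite h2 addr0 mulrC fg1.
  have -> : h = 0 by apply/eqP; rewrite -sqrf_eq0 expr2 hh.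
  have -> : g = f^-1 by apply: (mulfI f_neq0); rewrite fg1 divff.
  by right; exists f.
have efg : e + f * g = 1 by apply: (mulfI e_neq0); rewrite mulr1 -[RHS]e1; ring.
have e_1 : e = 1.
  by apply: (mulfI e_neq0); rewrite mulr1; apply: (addIr (f * g)); rewrite e2 efg.
move: ef f1 ge g1 h1 h2; rewrite e_1 !mul1r !mulr1 => ef f1 ge g1 h1 h2.
have f0 : f = 0 by rewrite -[LHS]f1 ef.
have g0 : g = 0 by rewrite -[LHS]g1 ge.
move: h1 h2; rewrite f0 g0 !mul0r add0r => h1 h2.
by left; rewrite h1 h2 mx2_1.
Qed.

Lemma sigma_cases (S G : 'M[F]_2) x : x != 0 -> S \in unitmx ->
  L1 S *m L2 S *m L1 S = L2 S *m L1 S *m L2 S -> G = 1%:M \/ G = Gm F ->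
  let T := mx2 0 x x^-1 0 in
  L1 T *m L1 S *m L1 T = L2 G *m L1 G *m L1 S *m L1 G *m L2 G ->
  S = 1%:M \/ exists2 c, c != 0 & S = mx2 0 (x ^+ 2 * c) c 0.
Proof.
case: (mx2_ex S) => [a [b [c [d ->]]]] x_neq0 S_unit + G_cases /=.
rewrite !Lmat21_mx2 !Lmat22_mx2 !mul_mx3 !mx3_simpl.
move=> /mx3_inj[[a2 ab _] [ca _ _] _] TST.
have [d_a b_c] : d = a /\ b = x ^+ 2 * c.
  move: TST; case: G_cases => ->; rewrite -?mx2_1 !Lmat21_mx2 !Lmat22_mx2 !mul_mx3;
    rewrite !mx3_simpl ?(mulN1r, mulrN1, opprK) => /mx3_inj[[<- <- _] _ _];
    by rewrite mulrAC divff // mul1r mulrAC expr2.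
rewrite d_a in S_unit ab ca *.
have [a0 | a_neq0] := eqVneq a 0.
  right; exists c; last by rewrite a0 b_c.
  apply: contraTneq S_unit => c0; rewrite a0 b_c c0 mulr0.
  have -> : mx2 0 0 0 0 = 0 :> 'M[F]_2 by apply/matrixP => k l; rewrite !mxE !if_same.
  by rewrite unitmxE det0 unitr0.
have baa : b * (a * a) = 0 by apply: (addrI (a * b)); rewrite addr0 mulrA ab mulrC.
have aac : a * a * c = 0 by apply: (addrI (c * a)); rewrite ca addr0 mulrC.
have aa_neq0 : a * a != 0 by rewrite mulf_neq0.
have b0 : b = 0 by apply/eqP; move/eqP: baa; rewrite mulf_eq0 (negbTE aa_neq0) orbF.
have c0 : c = 0 by apply/eqP; move/eqP: aac; rewrite mulf_eq0 (negbTE aa_neq0).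
have a1 : a = 1 by apply: (mulfI a_neq0); rewrite mulr1 -[RHS]a2 b0 !mul0r addr0.
by left; rewrite a1 b0 c0 mx2_1.
Qed.

Lemma hlr_equiv_refl n (S T G : 'M[F]_2) : hlr_equiv n S T G S T G.
Proof.
exists 1%:M; split; first exact: unitmx1.
by split => [i _ | j _]; rewrite invmx1 !mul1mx !mulmx1.
Qed.

End LocalMatrices.

Section Classification.
Variable F : numClosedFieldType.

Lemma zeta_antidiag (S T G : 'M[F]_2) x c : x != 0 -> c != 0 ->
  G = 1%:M \/ G = Gm F -> S = mx2 0 (x ^+ 2 * c) c 0 -> T = mx2 0 x x^-1 0 ->
  zeta2 S T G \/ zeta4 S T G.
Proof.
move=> x_neq0 c_neq0 G_cases -> ->.
have sc_neq0 : sqrtC c != 0 by rewrite sqrtC_eq0.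
have -> : mx2 0 x x^-1 0 = mx2 0 (x * sqrtC c / sqrtC c) (sqrtC c / (x * sqrtC c)) 0.
  by rewrite mulfK // invfM mulrCA divff // mulr1.
have roots : [/\ x ^+ 2 * c != 0, c != 0, (x * sqrtC c) ^+ 2 = x ^+ 2 * c & sqrtC c ^+ 2 = c].
  by rewrite mulf_neq0 ?expf_neq0 // exprMn sqrtCK.
by case: G_cases => ->; [right | left]; exists (x ^+ 2 * c), c, (x * sqrtC c), (sqrtC c).
Qed.

Lemma hom_local_rep_zeta m (S T G : 'M[F]_2) : is_hom_local_rep m.+3 S T G ->
  zeta1 S T G \/ zeta2 S T G \/ zeta3 S T G \/ zeta4 S T G \/
  zeta5 S T G \/ zeta6 S T G \/ zeta7 S T G.
Proof.
move=> [[S_unit _] [braid_S [_ [T_invol [_ [braid_T [_ [mixed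
          [G_invol [G_comm [_ [TG TST]]]]]]]]]]]].
have unpad := @padmx_inj F 3 m.+1.
move: (braid_S 1%N isT) (T_invol 1%N isT) (braid_T 1%N isT) (mixed 1%N isT)
  (G_invol 1%N isT) (G_comm 1%N 2%N isT isT) (TG 1%N isT) (TST 1%N isT).
rewrite !(@Lmat_padmx _ 2 m.+1) // -(padmx1 _ 3 m.+1) !(@padmxM _ 3 m.+1).
move=> /unpad {}braid_S /unpad {}T_invol /unpad {}braid_T /unpad {}mixed
  /unpad {}G_invol /unpad {}G_comm /unpad {}TG /unpad {}TST.
have G_cases := gamma_cases G_invol G_comm TG.
have [L1_1 L2_1] : L1 1%:M = 1%:M :> 'M[F]_3 /\ L2 1%:M = 1%:M :> 'M[F]_3.
  by rewrite -(mx2_1 F) Lmat21_mx2 Lmat22_mx2 mx3_1.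
case: (rho_cases T_invol braid_T) => [T1 | [x x_neq0 TE]].
  have S1 : S = 1%:M.
    by apply: Lmat21_eq22; move: mixed; rewrite T1 L1_1 L2_1 !mul1mx !mulmx1.
  have G1 : G = 1%:M by apply: Lmat21_eq22; move: TG; rewrite T1 L1_1 mul1mx mulmx1.
  by do 6!right; exact: And3 S1 T1 G1.
rewrite TE in TST.
case: (sigma_cases x_neq0 S_unit braid_S G_cases TST) => [S1 | [c c_neq0 SE]].
  do 4!right; case: G_cases => G_eq; [right; left | left];
    by exists x; exact: And4 x_neq0 S1 TE G_eq.
case: (zeta_antidiag x_neq0 c_neq0 G_cases SE TE) => [zeta_S | zeta_S].
- by right; left.
- by do 3!right; left.
Qed.

End Classification.

Theorem theorem3p4 (R : realType) (n : nat) (S T G : 'M[R[i]]_2) :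
  (3 <= n)%N -> is_hom_local_rep n S T G ->
  exists S' T' G' : 'M[R[i]]_2,
    (zeta1 S' T' G' \/ zeta2 S' T' G' \/ zeta3 S' T' G' \/ zeta4 S' T' G' \/
     zeta5 S' T' G' \/ zeta6 S' T' G' \/ zeta7 S' T' G') /\
    hlr_equiv n S T G S' T' G'.
Proof.
move=> n_ge3 hom; exists S, T, G; split; last exact: hlr_equiv_refl.
have [m n_eq] : exists m, n = m.+3 by exists (n - 3)%N; rewrite -addn3 subnK.
by move: hom; rewrite n_eq; apply: hom_local_rep_zeta.
Qed.
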